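(* Let $\gamma$ be an ordinal of $\mathrm{OT}$, $\perp\!\!\!\perp$ any pole, and $\beta<\gamma$. For every $\mathcal L_{\mathrm R}^{<\beta}$-sentence $A$ and every number $a$: (1) $\langle{\perp\!\!\!\perp},<\gamma\rangle\models a\,F_\beta\,\ulcorner A\urcorner$ if and only if $\langle{\perp\!\!\!\perp},<\gamma\rangle\models a\in\|A\|$; (2) $\langle{\perp\!\!\!\perp},<\gamma\rangle\models a\,T_\beta\,\ulcorner A\urcorner$ if and only if $\langle{\perp\!\!\!\perp},<\gamma\rangle\models a\in|A|$.
   Context: $\mathcal{L}$ is the language of $\mathsf{PA}$ ($\to,\forall,=$, constant $0$, function symbols for all primitive recursive functions); $\langle x,y\rangle$ primitive recursive pairing with projections $(\cdot)_0,(\cdot)_1$; $e\cdot m\simeq n$: the $e$-th partial recursive function on $m$ halts with output $n$. Fixed Gödel numbering. $\mathrm{OT}$ is a standard notation system for predicative ordinals. $\mathcal L_{\mathrm R}^{<\gamma}$ is $\mathcal L$ plus unary $x\in{\perp\!\!\!\perp}$ and binary $x\,F_\beta\,y$, $x\,T_\beta\,y$ for $\beta<\gamma$; $\mathcal L_{\perp\!\!\!\perp}=\mathcal L\cup\{\in{\perp\!\!\!\perp}\}$; $\mathrm{Sent}^{<\beta}_{\mathrm R}$ is the set of codes of $\mathcal L_{\mathrm R}^{<\beta}$-sentences. Explicit refutation/realisation formulas, by recursion on $A$: $s\in\|P\|:=P\to s\in{\perp\!\!\!\perp}$ ($P$ atomic of $\mathcal L_{\perp\!\!\!\perp}$); $s\in\|t\,F_\beta\,u\|:=s\,F_\beta\,(t\,\dot\in\|u\|)$;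 $s\in\|t\,T_\beta\,u\|:=s\,F_\beta\,(t\,\dot\in|u|)$; $s\in\|A\to B\|:=(s)_0\in|A|\wedge(s)_1\in\|B\|$; $s\in\|\forall xA(x)\|:=(s)_1\in\|A((s)_0)\|$; $s\in|A|:=\forall a(a\in\|A\|\to\langle s,a\rangle\in{\perp\!\!\!\perp})$; here $x\,\dot\in\|y\|$, $x\,\dot\in|y|$ are primitive recursive function symbols with $x\,\dot\in\|\ulcorner A\urcorner\|=\ulcorner\dot x\in\|A\|\urcorner$ and $x\,\dot\in|\ulcorner A\urcorner|=\ulcorner\dot x\in|A|\urcorner$ ($\dot x$: numeral of $x$) for sentences $A$, returning non-sentence codes when $y$ is not a sentence code. A pole is $\perp\!\!\!\perp\subseteq\mathbb N$ with ($e\cdot m\simeq n$ and $n\in\perp\!\!\!\perp$) $\Rightarrow\langle e,m\rangle\in\perp\!\!\!\perp$. For $\mathcal L_{\mathrm R}^{<\gamma}$-sentences define $\|A\|^{<\gamma}_{\perp\!\!\!\perp}\subseteq\mathbb N$ inductively: $n\in\|s=t\|$ iff ($s=t$ true in $\mathbb N$ implies $n\in\perp\!\!\!\perp$); $n\in\|m\in{\perp\!\!\!\perp}\|$ iff ($m\in\perp\!\!\!\perp$ implies $n\in\perp\!\!\!\perp$); $n\in\|m\,F_\beta\,l\|$ iff $l=\ulcorner A\urcorner$ for some $\mathcal L_{\mathrm R}^{<\beta}$-sentence $A$ and $n\in\|\bar m\in\|A\|\|$; $n\in\|m\,T_\beta\,l\|$ iff $l=\ulcorner A\urcorner$ for some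 $\mathcal L_{\mathrm R}^{<\beta}$-sentence $A$ and $n\in\|\bar m\in|A|\|$; $\|A\to B\|=\{n:(n)_0\in|A|,(n)_1\in\|B\|\}$; $\|\forall xA\|=\{n:(n)_1\in\|A(\overline{(n)_0})\|\}$; $|A|^{<\gamma}_{\perp\!\!\!\perp}=\{n:\forall m\in\|A\|\ \langle n,m\rangle\in\perp\!\!\!\perp\}$. Let $\mathbb F^\beta=\{(n,\ulcorner A\urcorner):A\in\mathrm{Sent}^{<\beta}_{\mathrm R},n\in\|A\|^{<\gamma}_{\perp\!\!\!\perp}\}$, $\mathbb T^\beta=\{(n,\ulcorner A\urcorner):A\in\mathrm{Sent}^{<\beta}_{\mathrm R},n\in|A|^{<\gamma}_{\perp\!\!\!\perp}\}$. $\langle{\perp\!\!\!\perp},<\gamma\rangle$ denotes the $\mathcal L_{\mathrm R}^{<\gamma}$-structure $\langle\mathbb N,\perp\!\!\!\perp,(\mathbb F^\beta)_{\beta<\gamma},(\mathbb T^\beta)_{\beta<\gamma}\rangle$. *)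

From Stdlib Require Import Arith List Cantor ClassicalEpsilon.
Import ListNotations.

Definition pairN (x y : nat) : nat := Cantor.to_nat (x, y).
Definition p0N (n : nat) : nat := fst (Cantor.of_nat n).
Definition p1N (n : nat) : nat := snd (Cantor.of_nat n).

(* Primitive recursive function expressions (names of the function     *)
(* missing arguments default to 0, extra ones are ignored.             *)
Inductive PR : Type :=
| PRzero : PR
| PRsucc : PR
| PRproj : nat -> PR
| PRcomp : PR -> PRs -> PR
| PRrec  : PR -> PR -> PR
with PRs : Type :=
| PRnil  : PRs
| PRcons : PR -> PRs -> PRs.

Fixpoint pr_eval (f : PR) (args : list nat) {struct f} : nat :=
  match f with
  | PRzero => 0
  | PRsucc => S (hd 0 args)
  | PRproj i => nth i args 0
  | PRcomp g gs => pr_eval g (prs_eval gs args)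
  | PRrec g h =>
      let rest := tl args in
      (fix r (k : nat) : nat :=
         match k with
         | 0 => pr_eval g rest
         | S k' => pr_eval h (k' :: r k' :: rest)
         end) (hd 0 args)
  end
with prs_eval (gs : PRs) (args : list nat) {struct gs} : list nat :=
  match gs with
  | PRnil => []
  | PRcons g gs' => pr_eval g args :: prs_eval gs' args
  end.

Fixpoint code_pr (f : PR) : nat :=
  match f with
  | PRzero => pairN 0 0
  | PRsucc => pairN 1 0
  | PRproj i => pairN 2 i
  | PRcomp g gs => pairN 3 (pairN (code_pr g) (code_prs gs))
  | PRrec g h => pairN 4 (pairN (code_pr g) (code_pr h))
  end
with code_prs (gs : PRs) : nat :=
  match gs with
  | PRnil => 0
  | PRcons g gs' => S (pairN (code_pr g) (code_prs gs'))
  end.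

Inductive MR : Type :=
| MRzero : MR
| MRsucc : MR
| MRproj : nat -> MR
| MRcomp : MR -> MRs -> MR
| MRrec  : MR -> MR -> MR
| MRmu   : MR -> MR
with MRs : Type :=
| MRnil  : MRs
| MRcons : MR -> MRs -> MRs.

Inductive mr_eval : MR -> list nat -> nat -> Prop :=
| ev_zero args : mr_eval MRzero args 0
| ev_succ args : mr_eval MRsucc args (S (hd 0 args))
| ev_proj i args : mr_eval (MRproj i) args (nth i args 0)
| ev_comp g gs args vs n :
    mrs_eval gs args vs -> mr_eval g vs n -> mr_eval (MRcomp g gs) args n
| ev_rec g h args n :
    mr_rec_eval g h (tl args) (hd 0 args) n -> mr_eval (MRrec g h) args n
| ev_mu f args k :
    mr_eval f (k :: args) 0 ->
    (forall j, j < k -> exists v, v <> 0 /\ mr_eval f (j :: args) v) ->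
    mr_eval (MRmu f) args k
with mrs_eval : MRs -> list nat -> list nat -> Prop :=
| evs_nil args : mrs_eval MRnil args []
| evs_cons g gs args v vs :
    mr_eval g args v -> mrs_eval gs args vs -> mrs_eval (MRcons g gs) args (v :: vs)
with mr_rec_eval : MR -> MR -> list nat -> nat -> nat -> Prop :=
| evr_0 g h rest n : mr_eval g rest n -> mr_rec_eval g h rest 0 n
| evr_S g h rest k m n :
    mr_rec_eval g h rest k m -> mr_eval h (k :: m :: rest) n ->
    mr_rec_eval g h rest (S k) n.

Fixpoint code_mr (f : MR) : nat :=
  match f with
  | MRzero => pairN 0 0
  | MRsucc => pairN 1 0
  | MRproj i => pairN 2 i
  | MRcomp g gs => pairN 3 (pairN (code_mr g) (code_mrs gs))
  | MRrec g h => pairN 4 (pairN (code_mr g) (code_mr h))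
  | MRmu g => pairN 5 (code_mr g)
  end
with code_mrs (gs : MRs) : nat :=
  match gs with
  | MRnil => 0
  | MRcons g gs' => S (pairN (code_mr g) (code_mrs gs'))
  end.

(* e . m ~ n : the e-th partial recursive function on m halts with output n
   (numbers that are not codes of programs index the nowhere-defined function) *)
Definition kleene_app (e m n : nat) : Prop :=
  exists f, code_mr f = e /\ mr_eval f [m] n.

Definition is_pole (P : nat -> Prop) : Prop :=
  forall e m n, kleene_app e m n -> P n -> P (pairN e m).

Record OrdNotation : Type := {
  OT : nat -> bool;
  olt : nat -> nat -> bool;
  olt_OT : forall x y, olt x y = true -> OT x = true /\ OT y = true;
  olt_trans : forall x y z, olt x y = true -> olt y z = true -> olt x z = true;
  olt_total : forall x y, OT x = true -> OT y = true ->
                olt x y = true \/ x = y \/ olt y x = true;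
  olt_wf : well_founded (fun x y => olt x y = true)
}.

Inductive term : Type :=
| Tvar  : nat -> term
| Tzero : term
| Tfun  : PR -> terms -> term
| Tpair : term -> term -> term
| Tp0   : term -> term
| Tp1   : term -> term
| TdotF : term -> term -> term
| TdotT : term -> term -> term
with terms : Type :=
| Tnil  : terms
| Tcons : term -> terms -> terms.

Inductive formula : Type :=
| Feq   : term -> term -> formula
| Fpole : term -> formula
| FF    : nat -> term -> term -> formula
| FT    : nat -> term -> term -> formula
| Fimp  : formula -> formula -> formula
| Fall  : formula -> formula.             (* binds de Bruijn variable 0 *)

Fixpoint numeral (n : nat) : term :=
  match n with
  | 0 => Tzero
  | S k => Tfun PRsucc (Tcons (numeral k) Tnil)
  end.

Definition Fbot : formula := Feq Tzero (numeral 1).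
Definition Fnot (A : formula) : formula := Fimp A Fbot.
Definition Fand (A B : formula) : formula := Fnot (Fimp A (Fnot B)).

Definition scons {X : Type} (x : X) (s : nat -> X) (i : nat) : X :=
  match i with 0 => x | S j => s j end.

Fixpoint tsubst (s : nat -> term) (t : term) : term :=
  match t with
  | Tvar i => s i
  | Tzero => Tzero
  | Tfun f ts => Tfun f (tssubst s ts)
  | Tpair a b => Tpair (tsubst s a) (tsubst s b)
  | Tp0 a => Tp0 (tsubst s a)
  | Tp1 a => Tp1 (tsubst s a)
  | TdotF a b => TdotF (tsubst s a) (tsubst s b)
  | TdotT a b => TdotT (tsubst s a) (tsubst s b)
  end
with tssubst (s : nat -> term) (ts : terms) : terms :=
  match ts with
  | Tnil => Tnil
  | Tcons t ts' => Tcons (tsubst s t) (tssubst s ts')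
  end.

Definition tlift (t : term) : term := tsubst (fun i => Tvar (S i)) t.

Fixpoint tclosed (k : nat) (t : term) : Prop :=
  match t with
  | Tvar i => i < k
  | Tzero => True
  | Tfun _ ts => tsclosed k ts
  | Tpair a b | TdotF a b | TdotT a b => tclosed k a /\ tclosed k b
  | Tp0 a | Tp1 a => tclosed k a
  end
with tsclosed (k : nat) (ts : terms) : Prop :=
  match ts with
  | Tnil => True
  | Tcons t ts' => tclosed k t /\ tsclosed k ts'
  end.

Fixpoint fclosed (k : nat) (A : formula) : Prop :=
  match A with
  | Feq t u | FF _ t u | FT _ t u => tclosed k t /\ tclosed k u
  | Fpole t => tclosed k t
  | Fimp A B => fclosed k A /\ fclosed k B
  | Fall A => fclosed (S k) A
  end.

Definition sentence (A : formula) : Prop := fclosed 0 A.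

Fixpoint levels_below (O : OrdNotation) (beta : nat) (A : formula) : Prop :=
  match A with
  | Feq _ _ | Fpole _ => True
  | FF d _ _ | FT d _ _ => olt O d beta = true
  | Fimp A B => levels_below O beta A /\ levels_below O beta B
  | Fall A => levels_below O beta A
  end.

Definition sentence_lt (O : OrdNotation) (beta : nat) (A : formula) : Prop :=
  sentence A /\ levels_below O beta A.

Fixpoint code_t (t : term) : nat :=
  match t with
  | Tvar i => pairN 0 i
  | Tzero => pairN 1 0
  | Tfun f ts => pairN 2 (pairN (code_pr f) (code_ts ts))
  | Tpair a b => pairN 3 (pairN (code_t a) (code_t b))
  | Tp0 a => pairN 4 (code_t a)
  | Tp1 a => pairN 5 (code_t a)
  | TdotF a b => pairN 6 (pairN (code_t a) (code_t b))
  | TdotT a b => pairN 7 (pairN (code_t a) (code_t b))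
  end
with code_ts (ts : terms) : nat :=
  match ts with
  | Tnil => 0
  | Tcons t ts' => S (pairN (code_t t) (code_ts ts'))
  end.

Fixpoint code (A : formula) : nat :=
  match A with
  | Feq t u => pairN 0 (pairN (code_t t) (code_t u))
  | Fpole t => pairN 1 (code_t t)
  | FF d t u => pairN 2 (pairN d (pairN (code_t t) (code_t u)))
  | FT d t u => pairN 3 (pairN d (pairN (code_t t) (code_t u)))
  | Fimp A B => pairN 4 (pairN (code A) (code B))
  | Fall A => pairN 5 (code A)
  end.

(* Explicit refutation / realisation formulas.
   [inF sg s A] is  s in ||A[sg]||  (A's free variable i read as the term sg i);
   for a sentence A, [s in ||A||] is [inF Tvar s A]. The pending substitution
   implements the clause  s in ||forall x A(x)|| := (s)_1 in ||A((s)_0)||.      *)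
Fixpoint inF (sg : nat -> term) (s : term) (A : formula) : formula :=
  match A with
  | Feq t u => Fimp (Feq (tsubst sg t) (tsubst sg u)) (Fpole s)
  | Fpole t => Fimp (Fpole (tsubst sg t)) (Fpole s)
  | FF d t u => FF d s (TdotF (tsubst sg t) (tsubst sg u))
  | FT d t u => FF d s (TdotT (tsubst sg t) (tsubst sg u))
  | Fimp A B =>
      Fand (Fall (Fimp (inF (fun i => tlift (sg i)) (Tvar 0) A)
                       (Fpole (Tpair (tlift (Tp0 s)) (Tvar 0)))))
           (inF sg (Tp1 s) B)
  | Fall A => inF (scons (Tp0 s) sg) (Tp1 s) A
  end.

Definition inT (sg : nat -> term) (s : term) (A : formula) : formula :=
  Fall (Fimp (inF (fun i => tlift (sg i)) (Tvar 0) A)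
             (Fpole (Tpair (tlift s) (Tvar 0)))).

Definition in_F (s : term) (A : formula) : formula := inF Tvar s A.
Definition in_T (s : term) (A : formula) : formula := inT Tvar s A.

Definition dot_gen (mk : term -> formula -> formula) (x y : nat) : nat :=
  match excluded_middle_informative (exists A, sentence A /\ code A = y) with
  | left h => code (mk (numeral x) (proj1_sig (constructive_indefinite_description _ h)))
  | right _ => code (Feq (Tvar 0) (Tvar 0))   (* a non-sentence code *)
  end.
Definition dotF : nat -> nat -> nat := dot_gen in_F.
Definition dotT : nat -> nat -> nat := dot_gen in_T.

Fixpoint teval (rho : nat -> nat) (t : term) : nat :=
  match t with
  | Tvar i => rho i
  | Tzero => 0
  | Tfun f ts => pr_eval f (tseval rho ts)
  | Tpair a b => pairN (teval rho a) (teval rho b)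
  | Tp0 a => p0N (teval rho a)
  | Tp1 a => p1N (teval rho a)
  | TdotF a b => dotF (teval rho a) (teval rho b)
  | TdotT a b => dotT (teval rho a) (teval rho b)
  end
with tseval (rho : nat -> nat) (ts : terms) : list nat :=
  match ts with
  | Tnil => []
  | Tcons t ts' => teval rho t :: tseval rho ts'
  end.

Definition rho0 : nat -> nat := fun _ => 0.

(* Realisability sets ||A||^{<gamma}_pole, by well-founded recursion on *)
(* the level b and structural recursion on A (environment rho for the   *)
(* values of free variables, implementing substitution of numerals).    *)
Definition real_body (O : OrdNotation) (P : nat -> Prop) (b : nat)
  (rec : forall d, olt O d b = true -> formula -> (nat -> nat) -> nat -> Prop)
  : formula -> (nat -> nat) -> nat -> Prop :=
  fix go (A : formula) (rho : nat -> nat) (n : nat) {struct A} : Prop :=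
    match A with
    | Feq t u => teval rho t = teval rho u -> P n
    | Fpole t => P (teval rho t) -> P n
    | FF d t u => exists h : olt O d b = true, exists B,
        sentence_lt O d B /\ teval rho u = code B /\
        rec d h (in_F (numeral (teval rho t)) B) rho0 n
    | FT d t u => exists h : olt O d b = true, exists B,
        sentence_lt O d B /\ teval rho u = code B /\
        rec d h (in_T (numeral (teval rho t)) B) rho0 n
    | Fimp A B =>
        (forall m, go A rho m -> P (pairN (p0N n) m)) /\ go B rho (p1N n)
    | Fall A => go A (scons (p0N n) rho) (p1N n)
    end.

Definition real (O : OrdNotation) (P : nat -> Prop) : nat -> formula -> (nat -> nat) -> nat -> Prop :=
  Fix (olt_wf O) (fun _ => formula -> (nat -> nat) -> nat -> Prop) (real_body O P).

Definition Fset (O : OrdNotation) (P : nat -> Prop) (gamma : nat) (A : formula) (n : nat) : Prop :=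
  real O P gamma A rho0 n.
Definition Tset (O : OrdNotation) (P : nat -> Prop) (gamma : nat) (A : formula) (n : nat) : Prop :=
  forall m, Fset O P gamma A m -> P (pairN n m).

Definition FFrel (O : OrdNotation) (P : nat -> Prop) (gamma beta n l : nat) : Prop :=
  exists A, sentence_lt O beta A /\ l = code A /\ Fset O P gamma A n.
Definition TTrel (O : OrdNotation) (P : nat -> Prop) (gamma beta n l : nat) : Prop :=
  exists A, sentence_lt O beta A /\ l = code A /\ Tset O P gamma A n.

Fixpoint sat (O : OrdNotation) (P : nat -> Prop) (gamma : nat)
  (rho : nat -> nat) (A : formula) : Prop :=
  match A with
  | Feq t u => teval rho t = teval rho u
  | Fpole t => P (teval rho t)
  | FF b t u => olt O b gamma = true /\ FFrel O P gamma b (teval rho t) (teval rho u)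
  | FT b t u => olt O b gamma = true /\ TTrel O P gamma b (teval rho t) (teval rho u)
  | Fimp A B => sat O P gamma rho A -> sat O P gamma rho B
  | Fall A => forall n, sat O P gamma (scons n rho) A
  end.

Definition models (O : OrdNotation) (P : nat -> Prop) (gamma : nat) (A : formula) : Prop :=
  sat O P gamma rho0 A.

(* The explicit formula [s ∈ ||A||] is satisfied in ⟨⫫, <γ⟩ exactly when the
   value of [s] lies in ||A||^{<γ}; this goes by induction on [A], and every
   clause matches on the nose except [F_δ] and [T_δ].  There [t ∈̇ ||u||]
   evaluates to the code of the sentence [t ∈ ||B||] with [u = ⌜B⌝], so the
   structure looks up that sentence in the relation 𝔽^δ, computed at level γ,
   whereas the realisability clause reads it at level δ.  The two agree because
   realisability of a formula does not depend on the level at which it is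
   computed as long as all its F/T symbols lie below that level.  Statements
   (1) and (2) then only unfold 𝔽^β and 𝕋^β. *)

From Stdlib Require Import Lia Classical FunctionalExtensionality Cantor ClassicalEpsilon.

Lemma pairN_inj a b c d : pairN a b = pairN c d -> a = c /\ b = d.
Proof. unfold pairN; intro H; apply Cantor.to_nat_inj in H; injection H; auto. Qed.

Ltac invert_pairN := repeat match goal with
  | H : pairN _ _ = pairN _ _ |- _ => apply pairN_inj in H as [? ?]
  | H : S _ = S _ |- _ => injection H as H
  end; try discriminate; subst.

Scheme PR_ind' := Induction for PR Sort Prop
  with PRs_ind' := Induction for PRs Sort Prop.
Combined Scheme PR_PRs_ind from PR_ind', PRs_ind'.
Scheme term_ind' := Induction for term Sort Prop
  with terms_ind' := Induction for terms Sort Prop.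
Combined Scheme term_terms_ind from term_ind', terms_ind'.

Lemma code_pr_inj :
  (forall f g, code_pr f = code_pr g -> f = g) /\
  (forall fs gs, code_prs fs = code_prs gs -> fs = gs).
Proof.
  apply PR_PRs_ind; intros; match goal with |- _ = ?g => destruct g end;
    cbn [code_pr code_prs] in *; invert_pairN; f_equal; auto.
Qed.

Lemma code_t_inj :
  (forall t u, code_t t = code_t u -> t = u) /\
  (forall ts us, code_ts ts = code_ts us -> ts = us).
Proof.
  apply term_terms_ind; intros; match goal with |- _ = ?u => destruct u end;
    cbn [code_t code_ts] in *; invert_pairN; f_equal; auto; apply code_pr_inj; assumption.
Qed.

Lemma code_inj A B : code A = code B -> A = B.
Proof.
  revert B; induction A; intros []; cbn [code]; intro H; invert_pairN; f_equal; auto;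
    apply code_t_inj; assumption.
Qed.

Lemma teval_tsubst_tssubst :
  (forall t rho sg,
     teval rho (tsubst sg t) = teval (fun i => teval rho (sg i)) t) /\
  (forall ts rho sg,
     tseval rho (tssubst sg ts) = tseval (fun i => teval rho (sg i)) ts).
Proof.
  apply term_terms_ind; intros; cbn [tsubst tssubst teval tseval];
    repeat match goal with H : forall rho sg, _ = _ |- _ => rewrite H end;
    reflexivity.
Qed.

Lemma teval_tsubst t rho sg :
  teval rho (tsubst sg t) = teval (fun i => teval rho (sg i)) t.
Proof. apply teval_tsubst_tssubst. Qed.

Lemma teval_tlift t rho m : teval (scons m rho) (tlift t) = teval rho t.
Proof. unfold tlift; rewrite teval_tsubst; reflexivity. Qed.

Lemma teval_tlift_env (sg : nat -> term) rho m :
  (fun i => teval (scons m rho) (tlift (sg i))) = (fun i => teval rho (sg i)).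
Proof. apply functional_extensionality; intro; apply teval_tlift. Qed.

Lemma teval_scons_env (sg : nat -> term) rho t :
  (fun i => teval rho (scons t sg i)) = scons (teval rho t) (fun i => teval rho (sg i)).
Proof. apply functional_extensionality; intros []; reflexivity. Qed.

Lemma teval_numeral rho n : teval rho (numeral n) = n.
Proof. induction n; cbn; auto. Qed.

Lemma tclosed_tsubst_tssubst :
  (forall t k m sg, tclosed k t -> (forall i, i < k -> tclosed m (sg i)) ->
     tclosed m (tsubst sg t)) /\
  (forall ts k m sg, tsclosed k ts -> (forall i, i < k -> tclosed m (sg i)) ->
     tsclosed m (tssubst sg ts)).
Proof. apply term_terms_ind; intros; cbn in *; intuition eauto. Qed.

Lemma tclosed_tlift k t : tclosed k t -> tclosed (S k) (tlift t).
Proof.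
  intro H; eapply tclosed_tsubst_tssubst; [exact H|]; intros; cbn; lia.
Qed.

Lemma tclosed_numeral k n : tclosed k (numeral n).
Proof. induction n; cbn; auto. Qed.

Lemma fclosed_inF A k m sg s :
  fclosed k A -> (forall i, i < k -> tclosed m (sg i)) -> tclosed m s ->
  fclosed m (inF sg s A).
Proof.
  revert k m sg s; induction A; intros k m sg s HA Hsg Hs; cbn in *.
  1-4: intuition; eapply tclosed_tsubst_tssubst; eauto.
  - destruct HA as [HA HB]; repeat split; try (cbn; lia).
    + eapply IHA1; [exact HA| |cbn; lia].
      intros; apply tclosed_tlift; auto.
    + apply tclosed_tlift; cbn; exact Hs.
    + eapply IHA2; eauto.
  - eapply IHA; [exact HA| |cbn; exact Hs].
    intros [|i] Hi; cbn; [exact Hs|apply Hsg; lia].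
Qed.

Lemma sentence_in_F s B : tclosed 0 s -> sentence B -> sentence (in_F s B).
Proof. intros; eapply fclosed_inF; eauto; intros; lia. Qed.

Lemma sentence_in_T s B : tclosed 0 s -> sentence B -> sentence (in_T s B).
Proof.
  intros; repeat split; try (cbn; lia).
  - eapply fclosed_inF; eauto; [intros; lia|cbn; lia].
  - apply tclosed_tlift; assumption.
Qed.

Lemma levels_below_inF O b sg s A :
  levels_below O b (inF sg s A) <-> levels_below O b A.
Proof.
  revert sg s; induction A; intros; cbn; try tauto.
  - rewrite IHA1, IHA2; tauto.
  - apply IHA.
Qed.

Lemma levels_below_in_T O b s A :
  levels_below O b (in_T s A) <-> levels_below O b A.
Proof. cbn; rewrite levels_below_inF; tauto. Qed.

Lemma levels_below_trans O d g A :
  levels_below O d A -> olt O d g = true -> levels_below O g A.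
Proof.
  induction A; cbn; intuition; eapply olt_trans; eauto.
Qed.

Section RealisabilityClauses.

Variables (O : OrdNotation) (P : nat -> Prop).

Lemma real_unfold b : real O P b = real_body O P b (fun d _ => real O P d).
Proof.
  unfold real; rewrite Fix_eq; [reflexivity|].
  intros x f g Hfg; f_equal.
  apply functional_extensionality_dep; intro d.
  apply functional_extensionality_dep; apply Hfg.
Qed.

Variable b : nat.

Lemma real_Feq t u rho n :
  real O P b (Feq t u) rho n <-> (teval rho t = teval rho u -> P n).
Proof. rewrite (real_unfold b); reflexivity. Qed.

Lemma real_Fpole t rho n :
  real O P b (Fpole t) rho n <-> (P (teval rho t) -> P n).
Proof. rewrite (real_unfold b); reflexivity. Qed.

Lemma real_FF d t u rho n :
  real O P b (FF d t u) rho n <->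
  olt O d b = true /\ exists B, sentence_lt O d B /\ teval rho u = code B /\
    real O P d (in_F (numeral (teval rho t)) B) rho0 n.
Proof.
  rewrite (real_unfold b); split; intros [h HB]; [split; assumption|exists h; exact HB].
Qed.

Lemma real_FT d t u rho n :
  real O P b (FT d t u) rho n <->
  olt O d b = true /\ exists B, sentence_lt O d B /\ teval rho u = code B /\
    real O P d (in_T (numeral (teval rho t)) B) rho0 n.
Proof.
  rewrite (real_unfold b); split; intros [h HB]; [split; assumption|exists h; exact HB].
Qed.

Lemma real_Fimp A B rho n :
  real O P b (Fimp A B) rho n <->
  (forall m, real O P b A rho m -> P (pairN (p0N n) m)) /\
  real O P b B rho (p1N n).
Proof. rewrite (real_unfold b); reflexivity. Qed.

Lemma real_Fall A rho n :
  real O P b (Fall A) rho n <-> real O P b A (scons (p0N n) rho) (p1N n).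
Proof. rewrite (real_unfold b); reflexivity. Qed.

End RealisabilityClauses.

Lemma real_level_irrelevant O P b1 b2 A :
  levels_below O b1 A -> levels_below O b2 A ->
  forall rho n, real O P b1 A rho n <-> real O P b2 A rho n.
Proof.
  induction A; cbn; intros H1 H2 rho k.
  - rewrite !real_Feq; reflexivity.
  - rewrite !real_Fpole; reflexivity.
  - rewrite !real_FF; tauto.
  - rewrite !real_FT; tauto.
  - destruct H1, H2; rewrite !real_Fimp.
    setoid_rewrite IHA1; auto; rewrite IHA2; auto; reflexivity.
  - rewrite !real_Fall; apply IHA; assumption.
Qed.

Section DotGen.

Variable mk : term -> formula -> formula.

Lemma dot_gen_code x B : sentence B -> dot_gen mk x (code B) = code (mk (numeral x) B).
Proof.
  intro HB; unfold dot_gen.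
  destruct excluded_middle_informative as [h|h]; [|exfalso; eauto].
  destruct constructive_indefinite_description as [B' HB']; cbn.
  rewrite (code_inj B' B (proj2 HB')); reflexivity.
Qed.

Lemma dot_gen_nonsentence x y :
  ~ (exists A, sentence A /\ code A = y) ->
  dot_gen mk x y = code (Feq (Tvar 0) (Tvar 0)).
Proof.
  intro Hy; unfold dot_gen.
  destruct excluded_middle_informative as [h|h]; [contradiction|reflexivity].
Qed.

Hypothesis sentence_mk : forall x B, sentence B -> sentence (mk (numeral x) B).
Hypothesis levels_below_mk :
  forall O d x B, levels_below O d (mk (numeral x) B) <-> levels_below O d B.

Lemma FFrel_dot_gen O P gamma d x y n :
  olt O d gamma = true ->
  FFrel O P gamma d n (dot_gen mk x y) <->
  exists B, sentence_lt O d B /\ y = code B /\ real O P d (mk (numeral x) B) rho0 n.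
Proof.
  intro Hd; unfold FFrel, Fset.
  destruct (classic (exists B, sentence B /\ code B = y)) as [[B [HB HBy]]|Hy].
  - subst y; rewrite dot_gen_code by exact HB.
    assert (Hlev : levels_below O d B -> forall k,
              real O P gamma (mk (numeral x) B) rho0 k <->
              real O P d (mk (numeral x) B) rho0 k).
    { intro HlevB; apply real_level_irrelevant; rewrite levels_below_mk;
        [eapply levels_below_trans|]; eauto. }
    split.
    + intros [C [[_ HlevC] [HC Hr]]]; apply code_inj in HC; subst C.
      apply levels_below_mk in HlevC.
      exists B; split; [split; assumption|split; [reflexivity|apply Hlev; assumption]].
    + intros [B' [[_ HlevB] [HB' Hr]]]; apply code_inj in HB'; subst B'.
      exists (mk (numeral x) B); split; [split|split; [reflexivity|apply Hlev]];
        auto; apply levels_below_mk; assumption.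
  - rewrite dot_gen_nonsentence by exact Hy; split.
    + intros [C [[HC _] [HCode _]]]; apply code_inj in HCode; subst C.
      destruct HC as [HC _]; cbn in HC; lia.
    + intros [B [[HB _] [HBy _]]]; exfalso; eauto.
Qed.

End DotGen.

Lemma FFrel_dotF O P gamma d x y n :
  olt O d gamma = true ->
  FFrel O P gamma d n (dotF x y) <->
  exists B, sentence_lt O d B /\ y = code B /\ real O P d (in_F (numeral x) B) rho0 n.
Proof.
  apply FFrel_dot_gen; intros.
  - apply sentence_in_F; [apply tclosed_numeral|assumption].
  - apply levels_below_inF.
Qed.

Lemma FFrel_dotT O P gamma d x y n :
  olt O d gamma = true ->
  FFrel O P gamma d n (dotT x y) <->
  exists B, sentence_lt O d B /\ y = code B /\ real O P d (in_T (numeral x) B) rho0 n.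
Proof.
  apply FFrel_dot_gen; intros.
  - apply sentence_in_T; [apply tclosed_numeral|assumption].
  - apply levels_below_in_T.
Qed.

Section Satisfaction.

Variables (O : OrdNotation) (P : nat -> Prop) (gamma : nat).

Lemma sat_Fand rho X Y :
  sat O P gamma rho (Fand X Y) <-> sat O P gamma rho X /\ sat O P gamma rho Y.
Proof.
  assert (Hbot : sat O P gamma rho Fbot <-> False) by (cbn; split; easy).
  unfold Fand, Fnot; cbn [sat]; rewrite Hbot.
  pose proof (classic (sat O P gamma rho X)); pose proof (classic (sat O P gamma rho Y)).
  tauto.
Qed.

Lemma sat_inF A rho sg s :
  sat O P gamma rho (inF sg s A) <->
  real O P gamma A (fun i => teval rho (sg i)) (teval rho s).
Proof.
  revert rho sg s; induction A; intros rho sg s; cbn [inF sat teval].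
  - rewrite real_Feq, !teval_tsubst; reflexivity.
  - rewrite real_Fpole, teval_tsubst; reflexivity.
  - rewrite real_FF, !teval_tsubst.
    split; intros [Hd H]; split; auto; apply (FFrel_dotF O P gamma _ _ _ _ Hd); auto.
  - rewrite real_FT, !teval_tsubst.
    split; intros [Hd H]; split; auto; apply (FFrel_dotT O P gamma _ _ _ _ Hd); auto.
  - rewrite sat_Fand, real_Fimp, IHA2; cbn [sat teval].
    setoid_rewrite IHA1; setoid_rewrite teval_tlift_env; setoid_rewrite teval_tlift.
    reflexivity.
  - rewrite real_Fall, IHA, teval_scons_env; reflexivity.
Qed.

Lemma sat_inT A rho sg s :
  sat O P gamma rho (inT sg s A) <->
  forall m, real O P gamma A (fun i => teval rho (sg i)) m -> P (pairN (teval rho s) m).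
Proof.
  unfold inT; cbn [sat teval scons].
  setoid_rewrite sat_inF; setoid_rewrite teval_tlift_env; setoid_rewrite teval_tlift.
  reflexivity.
Qed.

Lemma models_in_F A a : models O P gamma (in_F (numeral a) A) <-> Fset O P gamma A a.
Proof. unfold models, in_F; rewrite sat_inF, teval_numeral; reflexivity. Qed.

Lemma models_in_T A a : models O P gamma (in_T (numeral a) A) <-> Tset O P gamma A a.
Proof.
  unfold models, in_T; rewrite sat_inT, teval_numeral; reflexivity.
Qed.

Lemma FFrel_code beta A a :
  sentence_lt O beta A -> FFrel O P gamma beta a (code A) <-> Fset O P gamma A a.
Proof.
  intro HA; split.
  - intros [B [_ [HB Hr]]]; apply code_inj in HB; subst B; exact Hr.
  - intro Hr; exists A; auto.
Qed.

Lemma TTrel_code beta A a :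
  sentence_lt O beta A -> TTrel O P gamma beta a (code A) <-> Tset O P gamma A a.
Proof.
  intro HA; split.
  - intros [B [_ [HB Hr]]]; apply code_inj in HB; subst B; exact Hr.
  - intro Hr; exists A; auto.
Qed.

End Satisfaction.

Theorem lemma10 (O : OrdNotation) (gamma : nat) (P : nat -> Prop) (beta : nat)
  (Hgamma : OT O gamma = true) (HP : is_pole P) (Hbeta : olt O beta gamma = true)
  (A : formula) (HA : sentence_lt O beta A) (a : nat) :
  (models O P gamma (FF beta (numeral a) (numeral (code A))) <->
   models O P gamma (in_F (numeral a) A)) /\
  (models O P gamma (FT beta (numeral a) (numeral (code A))) <->
   models O P gamma (in_T (numeral a) A)).
Proof.
  rewrite models_in_F, models_in_T, <- FFrel_code, <- TTrel_code by exact HA.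
  unfold models; cbn [sat]; rewrite !teval_numeral.
  tauto.
Qed.
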